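(* Let $\rho:\mathcal{X}\to\mathbb{R}$ be a monetary risk measure, $\mathcal{M}\subseteq\mathcal{M}_1$ and $\mathbb{P}\in\mathcal{M}_1$. Suppose $\mathbb{P}$ is generalized equivalent to $\mathcal{M}$ and $\mathcal{M}$ is closed under countable convex combinations. Then for all $X\in L^\infty(\mathbb{P})$, $\rho^{\mathbb{P}}(X)=\rho^{\mathcal{M}}(X)$.
   Context: $(\Omega,\mathcal{F})$ is a measurable space, $\mathcal{M}_1$ the set of probability measures on it, $\mathcal{X}$ the space of pointwise bounded $\mathcal{F}$-measurable real functions. A monetary risk measure is $\rho:\mathcal{X}\to\mathbb{R}$ with, pointwise: $X\ge0\Rightarrow\rho(X)\le0$; $X\ge Y\Rightarrow\rho(X)\le\rho(Y)$; $\rho(X+a)=\rho(X)-a$ for $a\in\mathbb{R}$. For $P\in\mathcal{M}_1$ and $X\in L^\infty(P)=L^\infty(\Omega,\mathcal{F},P)$, $\rho^P(X)=\inf\{\rho(\widetilde X):\widetilde X\in\mathcal{X},P(\widetilde X=X)=1\}$. For $\mathcal{M}\subseteq\mathcal{M}_1$, $\rho^{\mathcal{M}}(X)=\sup_{P\in\mathcal{M}}\rho^P(X)$ for $X\in\bigcap_{P\in\mathcal{M}}L^\infty(P)$. $\mathbb{P}$ is generalized equivalent to $\mathcal{M}$ if (1) $P\ll\mathbb{P}$ for all $P\in\mathcal{M}$, and (2) for $A\in\mathcal{F}$, $P(A)=0$ for all $P\in\mathcal{M}$ implies $\mathbb{P}(A)=0$. Closed under countable convex combinations means $\sum_i\lambda_iP_i\in\mathcal{M}$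 whenever $P_i\in\mathcal{M}$, $\lambda_i\ge0$, $\sum_i\lambda_i=1$. *)

From HB Require Import structures.
From mathcomp Require Import all_boot all_order all_algebra.
From mathcomp Require Import all_classical all_reals all_analysis.
Set Implicit Arguments. Unset Strict Implicit. Unset Printing Implicit Defensive.
Import Order.TTheory GRing.Theory Num.Theory.
Local Open Scope classical_set_scope.
Local Open Scope ring_scope.

Section risk.
Context (d : measure_display) (T : measurableType d) (R : realType).

Definition bdd_meas (X : T -> R) : Prop :=
  measurable_fun setT X /\ exists c : R, forall w, `|X w| <= c.

Definition monetary_risk_measure (rho : (T -> R) -> R) : Prop :=
  [/\ forall X, bdd_meas X -> (forall w, 0 <= X w) -> rho X <= 0,
      forall X Y, bdd_meas X -> bdd_meas Y -> (forall w, Y w <= X w) ->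
        rho X <= rho Y
    & forall X (a : R), bdd_meas X -> rho (fun w => X w + a) = rho X - a].

(* L^oo(P): F-measurable functions that are P-essentially bounded
   (represented by their representatives) *)
Definition Linfty (P : probability T R) (X : T -> R) : Prop :=
  measurable_fun setT X /\ exists c : R, P [set w | c < `|X w|] = 0%E.

Definition rhoP (rho : (T -> R) -> R) (P : probability T R) (X : T -> R)
  : \bar R :=
  ereal_inf [set (rho Xt)%:E | Xt in
             [set Xt | bdd_meas Xt /\ P [set w | Xt w = X w] = 1%E]].

Definition rhoM (rho : (T -> R) -> R) (M : set (probability T R))
  (X : T -> R) : \bar R :=
  ereal_sup [set rhoP rho P X | P in M].

Definition gen_equiv (PP : probability T R) (M : set (probability T R)) : Prop :=
  (forall P, M P -> P `<< PP) /\
  (forall A, measurable A -> (forall P, M P -> P A = 0%E) -> PP A = 0%E).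

Definition closed_countable_convex (M : set (probability T R)) : Prop :=
  forall (Ps : nat -> probability T R) (lam : nat -> R),
    (forall i, M (Ps i)) -> (forall i, 0 <= lam i) ->
    (\sum_(0 <= i <oo) (lam i)%:E = 1)%E ->
    exists Q : probability T R, M Q /\
      forall A, measurable A ->
        Q A = (\sum_(0 <= i <oo) ((lam i)%:E * Ps i A))%E.

End risk.

From HB Require Import structures.
From mathcomp Require Import all_boot all_order all_algebra.
From mathcomp Require Import all_classical all_reals all_analysis.
Set Implicit Arguments. Unset Strict Implicit. Unset Printing Implicit Defensive.
Import Order.TTheory GRing.Theory Num.Theory.
Local Open Scope classical_set_scope.
Local Open Scope ring_scope.

(* Halmos-Savage exhaustion.  Call B good if PP is dominated on B by some
   member of M.  Mixing countably many members of M with weights 2^-(n+1)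
   shows that good sets are closed under countable unions, so there is a good
   B of maximal PP-measure, say dominated by Q in M.  Every P in M vanishes on
   ~B: removing from ~B a P-null part N of maximal PP-measure leaves a set on
   which PP is dominated by P, and adding it to B keeps B good, so it is
   PP-null, hence P-null.  Generalized equivalence then gives PP(~B) = 0, that
   is PP << Q.  Finally rho^P X only decreases when P acquires more null sets
   (there are more representatives of X). *)

Section risk.
Context d (T : measurableType d) (R : realType).
Local Open Scope ereal_scope.

Lemma measure_bigcup_null (mu : {measure set T -> \bar R}) (F : (set T)^nat) :
  (forall n, measurable (F n)) -> (forall n, mu (F n) = 0) ->
  mu (\bigcup_n F n) = 0.
Proof.
move=> mF F0; apply: measure_negligible; first exact: bigcupT_measurable.
by apply: negligible_bigcup => n; exists (F n); split.
Qed.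

Lemma measureU_le_null (mu : {finite_measure set T -> \bar R}) (A B : set T) :
  measurable A -> measurable B -> A `&` B = set0 ->
  mu (A `|` B) <= mu A -> mu B = 0.
Proof.
move=> mA mB AB0; rewrite measureU// -[leRHS]adde0 leeD2lE ?fin_num_measure//.
by move=> B0; apply/eqP; rewrite -measure_le0.
Qed.

Lemma exists_max_measure (mu : {finite_measure set T -> \bar R})
    (F : set (set T)) :
  (forall A, F A -> measurable A) -> F !=set0 ->
  (forall G : (set T)^nat, (forall n, F (G n)) -> F (\bigcup_n G n)) ->
  exists2 B, F B & forall A, F A -> mu A <= mu B.
Proof.
move=> mF [A0 FA0] FU; set s := ereal_sup [set mu A | A in F].
have s_ub A : F A -> mu A <= s by move=> FA; apply: ereal_sup_ubound; exists A.
have s_fin : s \is a fin_num.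
  have sT : s <= mu setT.
    by apply: ge_ereal_sup => _ [A FA <-]; apply: le_measure; rewrite ?inE//; exact: mF.
  rewrite ge0_fin_numE; last exact: le_trans (measure_ge0 mu A0) (s_ub _ FA0).
  by rewrite (le_lt_trans sT)// ltey_eq fin_num_measure.
have inv_gt0 (n : nat) : (0 < n.+1%:R^-1 :> R)%R by rewrite invr_gt0.
have /choice[G G_adh] : forall n : nat,
    exists A, F A /\ s - (n.+1%:R^-1)%:E < mu A.
  move=> n; have [_ [A FA <-] ?] := @ub_ereal_sup_adherent R _ _ (inv_gt0 n) s_fin.
  by exists A.
have FG : F (\bigcup_n G n) by apply: FU => n; case: (G_adh n).
exists (\bigcup_n G n) => //; suff s_le : s <= mu (\bigcup_n G n).
  by move=> A /s_ub /le_trans; apply.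
apply/lee_addgt0Pr => e e0.
have [n _ ne] := near_infty_natSinv_lt (PosNum e0).
have [FGn /ltW] := G_adh n; rewrite leeBlDr// => /le_trans; apply.
apply: leeD; last by rewrite lee_fin; exact/ltW/(ne n (leqnn n)).
by apply: le_measure; rewrite ?inE; [exact: mF | exact: mF | exact: bigcup_sup].
Qed.

Definition dominated_on (mu nu : set T -> \bar R) (B : set T) :=
  forall A, measurable A -> A `<=` B -> nu A = 0 -> mu A = 0.

Lemma dominated_on_bigcup (mu nu : {measure set T -> \bar R})
    (nus : nat -> set T -> \bar R) (B : (set T)^nat) :
  (forall n, measurable (B n)) -> (forall n, dominated_on mu (nus n) (B n)) ->
  (forall n, content_dominates nu (nus n)) -> dominated_on mu nu (\bigcup_n B n).
Proof.
move=> mB mu_nus nu_nus A mA AB nuA0.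
have mAB n : measurable (A `&` B n) by exact: measurableI.
rewrite -(setIidl AB) setI_bigcupr; apply: measure_bigcup_null => // n.
apply: mu_nus; [exact: mAB | exact: subIsetr |].
by apply: nu_nus; [exact: mAB | exact: subset_measure0 (@subIsetl _ _ _) nuA0].
Qed.

Lemma dominated_on_conull (mu nu : {measure set T -> \bar R}) (B : set T) :
  measurable B -> dominated_on mu nu B -> mu (~` B) = 0 -> mu `<< nu.
Proof.
move=> mB mu_nu_B mu_nB0; apply/null_content_dominatesP => A mA nuA0.
have mAB : measurable (A `&` B) by exact: measurableI.
have muAB0 : mu (A `&` B) = 0.
  apply: mu_nu_B; [exact: mAB | exact: subIsetr |].
  exact: subset_measure0 (@subIsetl _ _ _) nuA0.
apply/eqP; rewrite -measure_le0 -muAB0 -(measureU0 mAB (measurableC mB) mu_nB0).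
apply: le_measure; rewrite ?inE; [exact: mA | exact: measurableU (measurableC mB) |].
by move=> x Ax; have [Bx|nBx] := pselect (B x); [left | right].
Qed.

Lemma exists_null_part (nu : {measure set T -> \bar R})
    (mu : {finite_measure set T -> \bar R}) (C : set T) :
  exists N, [/\ measurable N, N `<=` C, nu N = 0 & dominated_on mu nu (C `\` N)].
Proof.
pose F := [set N | [/\ measurable N, N `<=` C & nu N = 0]].
have [N [mN NC nuN0] Nmax] : exists2 N, F N & forall A, F A -> mu A <= mu N.
  apply: exists_max_measure; first by move=> A [].
    by exists set0; split; [exact: measurable0 | exact: sub0set | exact: measure0].
  move=> G FG; split.
  - by apply: bigcupT_measurable => n; have [] := FG n.
  - by apply: bigcup_sub => n _; have [] := FG n.
  - by apply: measure_bigcup_null => n; have [] := FG n.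
exists N; split => // A mA ACN nuA0; apply: (measureU_le_null mN mA).
  by apply/seteqP; split => // x [Nx /ACN[]].
apply: Nmax; split; first exact: measurableU.
  by move=> x [/NC|/ACN[]].
exact: null_set_setU.
Qed.

Section countable_convex.
Variable M : set (probability T R).
Hypothesis cvxM : closed_countable_convex M.

Lemma closed_countable_convex_dominates (Ps : nat -> probability T R) :
  (forall n, M (Ps n)) ->
  exists2 Q, M Q & forall n, content_dominates Q (Ps n).
Proof.
move=> MPs; pose lam n : R := (1 / (2 ^ (n + 1))%:R)%R.
have lam_gt0 n : (0 < lam n)%R by rewrite divr_gt0// ltr0n expn_gt0.
have lam1 : \sum_(0 <= n <oo) (lam n)%:E = 1.
  by move/cvg_lim: (@cvg_geometric_eseries_half R 1 0) => ->//; rewrite expr0 divr1.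
have [Q [MQ QE]] := @cvxM Ps lam MPs (fun n => ltW (lam_gt0 n)) lam1.
exists Q => // n A mA QA0.
have term_ge0 k : 0 <= (lam k)%:E * Ps k A by rewrite mule_ge0// lee_fin ltW.
have sum0 : \sum_(0 <= k <oo) (lam k)%:E * Ps k A = 0 by rewrite -QE.
have : (lam n)%:E * Ps n A <= 0.
  rewrite -sum0 (@nneseriesD1 _ _ n xpredT)// leeDl//.
  by apply: nneseries_ge0 => k _ _; exact: term_ge0.
rewrite pmule_rle0 ?lte_fin// => PnA_le0.
by apply/eqP; rewrite -measure_le0.
Qed.

Definition dominated_in (mu : set T -> \bar R) (B : set T) :=
  measurable B /\ exists2 Q, M Q & dominated_on mu Q B.

Lemma dominated_in_bigcup (mu : {measure set T -> \bar R}) (B : (set T)^nat) :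
  (forall n, dominated_in mu (B n)) -> dominated_in mu (\bigcup_n B n).
Proof.
move=> muB; have /choice[Qs QsE] : forall n, exists Q, M Q /\ dominated_on mu Q (B n).
  by move=> n; have [_ [Q]] := muB n; exists Q.
have [Q MQ Qdom] := closed_countable_convex_dominates (fun n => (QsE n).1).
split; first by apply: bigcupT_measurable => n; have [] := muB n.
exists Q => //; apply: dominated_on_bigcup Qdom => n; last exact: (QsE n).2.
by have [] := muB n.
Qed.

Lemma gen_equiv_dominating (PP : probability T R) :
  gen_equiv PP M -> exists2 Q, M Q & PP `<< Q.
Proof.
move=> [M_PP PP_M].
have [Q0 MQ0] : exists Q, M Q.
  apply: contrapT => noM; suff : PP setT = 0.
    by rewrite probability_setT => /eqP; rewrite onee_eq0.
  by apply: PP_M => // P MP; case: noM; exists P.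
have in0 : dominated_in PP set0.
  by split => //; exists Q0 => // A _; rewrite subset0 => -> _; exact: measure0.
have [B [mB [Q MQ PP_Q]] Bmax] := exists_max_measure PP
  (fun A (inA : dominated_in PP A) => inA.1) (ex_intro _ set0 in0)
  (@dominated_in_bigcup PP).
exists Q => //; apply: (dominated_on_conull mB PP_Q).
apply: PP_M => [|P MP]; first exact: measurableC.
have [N [mN NB PN0 PP_P]] := exists_null_part P PP (~` B).
have mB' : measurable (~` B `\` N) by apply: measurableD => //; exact: measurableC.
have PP_B'0 : PP (~` B `\` N) = 0.
  apply: (measureU_le_null mB mB'); first by apply/seteqP; split => // x [? []].
  apply: Bmax; rewrite -bigcup2E; apply: dominated_in_bigcup => -[|[|n]] //=.
  - by split => //; exists Q.
  - by split => //; exists P.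
have P_B'0 : P (~` B `\` N) = 0.
  by apply/(null_content_dominatesP P PP).1 => //; exact: M_PP.
by rewrite -(setDUK NB) null_set_setU.
Qed.

End countable_convex.

Lemma measurable_set_eqr (f g : T -> R) :
  measurable_fun setT f -> measurable_fun setT g -> measurable [set w | f w = g w].
Proof.
move=> mf mg.
have := measurable_realfun.measurable_fun_eqr mf mg measurableT (Y := [set true]) I.
by rewrite setTI; congr measurable; apply/seteqP; split => w /= /eqP.
Qed.

Lemma dominates_probability_eq1 (P1 P2 : probability T R) (E : set T) :
  P1 `<< P2 -> measurable E -> P2 E = 1 -> P1 E = 1.
Proof.
move=> /null_content_dominatesP P12 mE P2E.
have P2nE0 : P2 (~` E) = 0 by rewrite probability_setC// P2E subee.
have P1nE0 : P1 (~` E) = 0 := P12 _ (measurableC mE) P2nE0.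
by rewrite -(probability_setT P1) -(setUCr E) (measureU0 mE (measurableC mE) P1nE0).
Qed.

Lemma rhoP_le_dominates (rho : (T -> R) -> R) (P1 P2 : probability T R) (X : T -> R) :
  P1 `<< P2 -> measurable_fun setT X -> rhoP rho P1 X <= rhoP rho P2 X.
Proof.
move=> P12 mX; apply: ereal_inf_le_tmp; apply: image_subset => Xt [[mXt bXt] P2E].
by split; [split | exact: dominates_probability_eq1 (measurable_set_eqr mXt mX) P2E].
Qed.

End risk.

Theorem theorem5p6 (d : measure_display) (T : measurableType d) (R : realType)
  (rho : (T -> R) -> R) (M : set (probability T R)) (PP : probability T R) :
  monetary_risk_measure rho ->
  gen_equiv PP M ->
  closed_countable_convex M ->
  forall X : T -> R, Linfty PP X -> rhoP rho PP X = rhoM rho M X.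
Proof.
move=> _ PP_M cvxM X [mX _].
have [Q MQ PP_Q] := gen_equiv_dominating cvxM PP_M.
apply/eqP; rewrite eq_le; apply/andP; split.
- apply: le_trans (rhoP_le_dominates rho PP_Q mX) _.
  by apply: ereal_sup_ubound; exists Q.
- apply: ge_ereal_sup => _ [P MP <-]; apply: rhoP_le_dominates mX.
  exact: PP_M.1.
Qed.
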